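(* Let $\mathrm{e}<\delta\le\sum_{j=1}^5(5/6)^j$, $\tau=300\delta\ln(1+k)$, $\gamma=(\delta-1)(3-\delta)/(\delta-2)$, $S=2\sum_{j=0}^{4}(5/6)^j\tau$ and $$M=\frac{(\delta+1)\ln\delta-1}{\ln\delta-1}\,S+\frac{(\gamma+2\tau+1)\ln\delta-1}{\ln\delta-1}.$$ In an execution of One-fail Adaptive with parameter $\delta$ on $k$ initially active nodes, if the number of messages still to be delivered is more than $M$, then after $(\delta+1)k$ AT-steps the number of messages left to deliver is at most $M$ with probability at least $1-1/(1+k)$.
   Context: Model: one-hop radio network without collision detection; in each synchronous step, a message is delivered iff exactly one active node transmits, and the delivering node becomes idle; nodes cannot distinguish silence from collision; all $k$ nodes are activated at time $0$. Protocol One-fail Adaptive with parameter $\delta$, run by each active node: initially $\widetilde\kappa\leftarrow\delta+1$, $\sigma\leftarrow0$. In step $s=1,2,\dots$: if $s$ is even (BT-step) transmit with probability $1/(1+\log_2(\sigma+1))$; if $s$ is odd (AT-step) transmit with probability $1/\widetilde\kappa$, then $\widetilde\kappa\leftarrow\widetilde\kappa+1$. On receiving another node's message in step $s$: $\sigma\leftarrow\sigma+1$, and $\widetilde\kappa\leftarrow\max\{\widetilde\kappa-\delta,\delta+1\}$ if $s$ even, $\widetilde\kappa\leftarrow\max\{\widetilde\kappa-\delta-1,\delta+1\}$ if $s$ odd; a node stops once its message is delivered. *)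

From Stdlib Require Import Reals List Arith Bool.
Import ListNotations.
Open Scope R_scope.

Record node := mkNode { active : bool; kap : R; sig : nat }.

Definition log2 (x : R) : R := ln x / ln 2.

(* Transmission probability of an (active) node at step s (1-based). *)
Definition tx_prob (s : nat) (nd : node) : R :=
  if Nat.even s then / (1 + log2 (INR (sig nd) + 1)) else / kap nd.

(* All transmission patterns (one bit per node) for n nodes. *)
Fixpoint patterns (n : nat) : list (list bool) :=
  match n with
  | O => [ [] ]
  | S n' => map (cons true) (patterns n') ++ map (cons false) (patterns n')
  end.

Fixpoint pat_weight (s : nat) (st : list node) (X : list bool) : R :=
  match st, X with
  | nd :: st', x :: X' =>
      (if active nd then (if x then tx_prob s nd else 1 - tx_prob s nd)
       else (if x then 0 else 1)) * pat_weight s st' X'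
  | _, _ => 1
  end.

Fixpoint n_tx (st : list node) (X : list bool) : nat :=
  match st, X with
  | nd :: st', x :: X' => (if active nd && x then 1 else 0) + n_tx st' X'
  | _, _ => 0
  end%nat.

(* Update of one node in step s, given whether a message was delivered
   (exactly one active transmitter) and whether this node transmitted. *)
Definition upd_node (delta : R) (s : nat) (delivered : bool) (nd : node) (x : bool) : node :=
  if active nd then
    if delivered && x then mkNode false (kap nd) (sig nd)   (* delivered its message: stops *)
    else
      let k1 := if Nat.even s then kap nd else kap nd + 1 in
      if delivered then
        mkNode true
          (Rmax (k1 - (if Nat.even s then delta else delta + 1)) (delta + 1))
          (S (sig nd))
      else mkNode true k1 (sig nd)
  else nd.

Fixpoint map2n {A B C} (f : A -> B -> C) (l : list A) (m : list B) : list C :=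
  match l, m with
  | a :: l', b :: m' => f a b :: map2n f l' m'
  | _, _ => []
  end.

Definition next_state (delta : R) (s : nat) (st : list node) (X : list bool) : list node :=
  map2n (upd_node delta s (Nat.eqb (n_tx st X) 1)) st X.

Definition n_active (st : list node) : nat := length (filter active st).

Fixpoint sumR (l : list R) : R :=
  match l with [] => 0 | x :: l' => x + sumR l' end.

(* Probability that, starting in state st just before step s and running
   T further steps, the number of active nodes (messages still to be
   delivered) is at most M. *)
Fixpoint prob_le (delta M : R) (T s : nat) (st : list node) : R :=
  match T with
  | O => if Rle_dec (INR (n_active st)) M then 1 else 0
  | S T' =>
      sumR (map (fun X => pat_weight s st X *
                          prob_le delta M T' (S s) (next_state delta s st X))
                (patterns (length st)))
  end.

Definition init_state (delta : R) (k : nat) : list node :=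
  repeat (mkNode true (delta + 1) 0) k.

Definition prob_after (delta M : R) (k t : nat) : R :=
  prob_le delta M t 1 (init_state delta k).

(* Number of AT-steps (odd steps) among steps 1..t. *)
Definition n_AT (t : nat) : nat := ((t + 1) / 2)%nat.

From Stdlib Require Import Reals List Arith Lra Lia Psatz.
Open Scope R_scope.

(* Proof of the threshold theorem for One-fail Adaptive: a potential-function
   (supermartingale) argument carried out on the exact distribution [prob_le].
   1. Symmetry.  At every time all active nodes share the same state
      (kappa, sigma): they start alike and every update depends only on the
      node's own state and on whether a message was delivered.  One step is
      therefore a two-outcome experiment, a delivery happening with
      probability n q (1-q)^(n-1) (n active nodes, q their common
      transmission probability).
   2. Invariant.  kappa >= delta+1 and
      kappa >= delta+1 + #AT-steps - (delta+1)(k-n),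
      since a silent AT-step raises kappa by one and a delivery lowers it by
      at most delta+1.
   3. Potential.  Phi = 0 when n <= M, and otherwise
      Phi = min(1, exp(lam (kappa - 5/6 n - 5/18 M)) + eps (8k+2-s)).
      Phi is a supermartingale: while kappa <= 5/6 n the budget term
      eps (8k+2-s) pays for the step; otherwise kappa and n are within a
      constant factor, so an AT-step delivers with probability >= 0.35
      (using 0.3666 <= exp(-1) <= 0.3681) and the exponential decreases on
      average.
   4. After (delta+1)k AT-steps the invariant forces Phi = 1 whenever n > M,
      hence P(n > M) <= Phi(start) <= 1/(1+k), because the hypotheses force
      M >= 11000 ln(1+k) and k >= 10000.
   The file follows this plan: expectations over transmission patterns,
   symmetric states, the invariant, numerical bounds on exp, the potential
   and its one-step estimate, the induction over the remaining steps, and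
   finally the bounds on the parameters from which the theorem follows. *)

Lemma sumR_app (l1 l2 : list R) : sumR (l1 ++ l2) = sumR l1 + sumR l2.
Proof. induction l1 as [|x l1 IH]; simpl; [ring | rewrite IH; ring]. Qed.

Lemma sumR_map_le {A : Type} (f g : A -> R) (l : list A) :
  (forall x, In x l -> f x <= g x) -> sumR (map f l) <= sumR (map g l).
Proof.
  induction l as [|x l IH]; simpl; intros H; [lra|].
  pose proof (H x (or_introl eq_refl)).
  pose proof (IH (fun y Hy => H y (or_intror Hy))). lra.
Qed.

Lemma sumR_map_ext {A : Type} (f g : A -> R) (l : list A) :
  (forall x, In x l -> f x = g x) -> sumR (map f l) = sumR (map g l).
Proof.
  induction l as [|x l IH]; simpl; intros H; [reflexivity|].
  rewrite (H x (or_introl eq_refl)), (IH (fun y Hy => H y (or_intror Hy))).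
  reflexivity.
Qed.

Lemma sumR_map_lin {A : Type} (f g : A -> R) (u v : R) (l : list A) :
  sumR (map (fun x => u * f x + v * g x) l) = u * sumR (map f l) + v * sumR (map g l).
Proof. induction l as [|x l IH]; simpl; [ring | rewrite IH; ring]. Qed.

Lemma sumR_map_scale {A : Type} (f : A -> R) (u : R) (l : list A) :
  sumR (map (fun x => u * f x) l) = u * sumR (map f l).
Proof. induction l as [|x l IH]; simpl; [ring | rewrite IH; ring]. Qed.

Lemma patterns_length (m : nat) (X : list bool) : In X (patterns m) -> length X = m.
Proof.
  revert X; induction m as [|m IH]; simpl; intros X HX.
  - destruct HX as [<- | []]; reflexivity.
  - apply in_app_or in HX as [HX | HX]; apply in_map_iff in HX as [Y [<- HY]];
      simpl; rewrite (IH Y HY); reflexivity.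
Qed.

Definition expect_ntx (s : nat) (st : list node) (f : nat -> R) : R :=
  sumR (map (fun X => pat_weight s st X * f (n_tx st X)) (patterns (length st))).

Lemma expect_ntx_ext (s : nat) (st : list node) (f g : nat -> R) :
  (forall c, f c = g c) -> expect_ntx s st f = expect_ntx s st g.
Proof. intros H; apply sumR_map_ext; intros X _; rewrite H; reflexivity. Qed.

Lemma expect_ntx_cons (s : nat) (nd : node) (st : list node) (f : nat -> R) :
  expect_ntx s (nd :: st) f =
  if active nd then tx_prob s nd * expect_ntx s st (fun c => f (S c))
                    + (1 - tx_prob s nd) * expect_ntx s st f
  else expect_ntx s st f.
Proof.
  unfold expect_ntx; simpl length; simpl patterns.
  rewrite map_app, sumR_app, !map_map; simpl.
  destruct (active nd); simpl.
  - rewrite <- !sumR_map_scale; f_equal; apply sumR_map_ext; intros; ring.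
  - rewrite (sumR_map_ext _ (fun X => 0 * (pat_weight s st X * f (n_tx st X))))
      by (intros; ring).
    rewrite sumR_map_scale, Rmult_0_l, Rplus_0_l.
    apply sumR_map_ext; intros; ring.
Qed.

Lemma expect_ntx_const (s : nat) (st : list node) (u : R) :
  expect_ntx s st (fun _ => u) = u.
Proof.
  induction st as [|nd st IH]; [unfold expect_ntx; simpl; ring|].
  rewrite expect_ntx_cons, IH; destruct (active nd); ring.
Qed.

Lemma expect_ntx_affine (s : nat) (st : list node) (u v : R) (f : nat -> R) :
  expect_ntx s st (fun c => u + v * f c) = u + v * expect_ntx s st f.
Proof.
  unfold expect_ntx.
  rewrite (sumR_map_ext _ (fun X => u * pat_weight s st X
                                    + v * (pat_weight s st X * f (n_tx st X))))
    by (intros; ring).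
  rewrite sumR_map_lin.
  replace (sumR (map (pat_weight s st) (patterns (length st)))) with 1; [ring|].
  rewrite <- (expect_ntx_const s st 1); apply sumR_map_ext; intros; ring.
Qed.

Lemma pat_weight_nonneg (s : nat) (st : list node) (X : list bool) :
  (forall nd, In nd st -> active nd = true -> 0 <= tx_prob s nd <= 1) ->
  0 <= pat_weight s st X.
Proof.
  revert X; induction st as [|nd st IH]; intros X H; destruct X as [|x X];
    simpl; try lra.
  apply Rmult_le_pos.
  - destruct (active nd) eqn:E; [|destruct x; lra].
    destruct (H nd (or_introl eq_refl) E); destruct x; lra.
  - apply IH; intros; apply H; simpl; auto.
Qed.

Lemma expect_ntx_mono (s : nat) (st : list node) (f g : nat -> R) :
  (forall nd, In nd st -> active nd = true -> 0 <= tx_prob s nd <= 1) ->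
  (forall c, f c <= g c) -> expect_ntx s st f <= expect_ntx s st g.
Proof.
  intros Hw Hfg; apply sumR_map_le; intros X _.
  apply Rmult_le_compat_l; [apply pat_weight_nonneg; exact Hw | apply Hfg].
Qed.

Lemma expect_ntx_delivery (s : nat) (st : list node) (h : bool -> R) :
  expect_ntx s st (fun c => h (Nat.eqb c 1)) =
  expect_ntx s st (fun c => if Nat.eqb c 1 then 1 else 0) * h true
  + (1 - expect_ntx s st (fun c => if Nat.eqb c 1 then 1 else 0)) * h false.
Proof.
  rewrite (expect_ntx_ext s st _
             (fun c => h false + (h true - h false) * (if Nat.eqb c 1 then 1 else 0)))
    by (intros c; destruct (Nat.eqb c 1); ring).
  rewrite expect_ntx_affine; ring.
Qed.

(* When every active node transmits with the same probability q, the number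
   of transmitters is binomial; we need the probabilities of 0 and 1. *)
Definition common_tx (s : nat) (st : list node) (q : R) : Prop :=
  forall nd, In nd st -> active nd = true -> tx_prob s nd = q.

Lemma expect_ntx_none (s : nat) (st : list node) (q : R) : common_tx s st q ->
  expect_ntx s st (fun c => if Nat.eqb c 0 then 1 else 0) = (1 - q) ^ n_active st.
Proof.
  unfold n_active; induction st as [|nd st IH]; intros H; [unfold expect_ntx; simpl; ring|].
  rewrite expect_ntx_cons.
  assert (H' : common_tx s st q) by (intros x Hx; apply H; simpl; auto).
  simpl filter; destruct (active nd) eqn:E; [|apply IH; exact H'].
  simpl; rewrite expect_ntx_const, IH, (H nd (or_introl eq_refl) E) by exact H'; ring.
Qed.

Lemma expect_ntx_single (s : nat) (st : list node) (q : R) : common_tx s st q ->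
  expect_ntx s st (fun c => if Nat.eqb c 1 then 1 else 0) =
  INR (n_active st) * q * (1 - q) ^ pred (n_active st).
Proof.
  induction st as [|nd st IH]; intros H; [unfold expect_ntx; simpl; ring|].
  rewrite expect_ntx_cons.
  assert (H' : common_tx s st q) by (intros x Hx; apply H; simpl; auto).
  unfold n_active in *; simpl filter; destruct (active nd) eqn:E; [|apply IH; exact H'].
  simpl length; simpl Nat.eqb.
  rewrite (expect_ntx_none s st q H'), IH, (H nd (or_introl eq_refl) E) by exact H'.
  unfold n_active; destruct (length (filter active st)); simpl pred;
    rewrite ?S_INR; simpl; ring.
Qed.

Definition uniform (st : list node) (kp : R) (sg : nat) : Prop :=
  forall nd, In nd st -> active nd = true -> kap nd = kp /\ sig nd = sg.

Definition next_kap (delta : R) (s : nat) (d : bool) (kp : R) : R :=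
  if d then Rmax ((if Nat.even s then kp else kp + 1)
                  - (if Nat.even s then delta else delta + 1)) (delta + 1)
  else (if Nat.even s then kp else kp + 1).

Definition next_sig (d : bool) (sg : nat) : nat := if d then S sg else sg.

Lemma next_kap_delivered (delta : R) (s : nat) (kp : R) :
  next_kap delta s true kp = Rmax (kp - delta) (delta + 1).
Proof. unfold next_kap; destruct (Nat.even s); f_equal; ring. Qed.

Lemma upd_uniform (delta : R) (s : nat) (d : bool) (st : list node) (X : list bool)
    (kp : R) (sg : nat) :
  length X = length st -> uniform st kp sg ->
  uniform (map2n (upd_node delta s d) st X) (next_kap delta s d kp) (next_sig d sg) /\
  (n_active (map2n (upd_node delta s d) st X) + (if d then n_tx st X else 0)
   = n_active st)%nat.
Proof.
  revert X; induction st as [|nd st IH]; intros X HL Hu.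
  - destruct X; simpl in *; [|discriminate].
    split; [intros ? [] | destruct d; reflexivity].
  - destruct X as [|x X]; simpl in HL; [discriminate|]; injection HL as HL.
    destruct (IH X HL (fun y Hy => Hu y (or_intror Hy))) as [IHu IHn].
    simpl map2n; split.
    + intros y [<- | Hy] Hya; [|exact (IHu y Hy Hya)].
      unfold upd_node in *; destruct (active nd) eqn:E; [|congruence].
      destruct (Hu nd (or_introl eq_refl) E) as [-> ->].
      destruct d, x; simpl in *; try discriminate; auto.
    + unfold n_active in *; cbn [filter n_tx length]; unfold upd_node at 1.
      destruct (active nd) eqn:E; destruct d, x; cbn [active andb filter length];
        rewrite ?E; cbn [filter length]; lia.
Qed.

Lemma next_state_uniform (delta : R) (s : nat) (st : list node) (X : list bool)
    (kp : R) (sg : nat) :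
  length X = length st -> uniform st kp sg ->
  let d := Nat.eqb (n_tx st X) 1 in
  uniform (next_state delta s st X) (next_kap delta s d kp) (next_sig d sg) /\
  (n_active (next_state delta s st X) + (if d then 1 else 0) = n_active st)%nat.
Proof.
  intros HL Hu d.
  destruct (upd_uniform delta s d st X kp sg HL Hu) as [Hu' Hn].
  split; [exact Hu'|]; unfold next_state; fold d.
  destruct d eqn:Ed; [apply Nat.eqb_eq in Ed; rewrite Ed in Hn|]; exact Hn.
Qed.

Lemma log2_nonneg (x : R) : 1 <= x -> 0 <= log2 x.
Proof.
  intros Hx; unfold log2, Rdiv.
  assert (H0 : 0 <= ln x).
  { destruct Hx as [Hx | <-]; [|rewrite ln_1; lra].
    rewrite <- ln_1; left; apply ln_increasing; lra. }
  assert (H2 : 0 < ln 2) by (rewrite <- ln_1; apply ln_increasing; lra).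
  apply Rmult_le_pos; [exact H0 | left; apply Rinv_0_lt_compat; exact H2].
Qed.

Lemma uniform_common_tx (s : nat) (st : list node) (kp : R) (sg : nat) :
  uniform st kp sg -> common_tx s st (tx_prob s (mkNode true kp sg)).
Proof.
  intros Hu nd Hin Ha; destruct (Hu nd Hin Ha) as [Hk Hs].
  unfold tx_prob; rewrite Hk, Hs; reflexivity.
Qed.

Lemma tx_prob_bounds (s : nat) (kp : R) (sg : nat) :
  1 <= kp -> 0 <= tx_prob s (mkNode true kp sg) <= 1.
Proof.
  intros Hk; unfold tx_prob; simpl.
  assert (Hinv : forall y, 1 <= y -> 0 <= / y <= 1).
  { intros y Hy; split; [left; apply Rinv_0_lt_compat; lra|].
    rewrite <- Rinv_1; apply Rinv_le_contravar; lra. }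
  destruct (Nat.even s); apply Hinv; [|exact Hk].
  pose proof (log2_nonneg (INR sg + 1) ltac:(pose proof (pos_INR sg); lra)); lra.
Qed.

(* The kappa invariant; [s / 2] is the number of AT-steps before step s. *)

Definition kap_invariant (delta : R) (k s n : nat) (kp : R) : Prop :=
  delta + 1 <= kp /\ delta + 1 + INR (s / 2) - (delta + 1) * (INR k - INR n) <= kp.

Lemma div2_S (s : nat) : (S s / 2 = s / 2 + (if Nat.even s then 0 else 1))%nat.
Proof.
  destruct (Nat.even s) eqn:E.
  - apply Nat.even_spec in E as [m ->].
    replace (S (2 * m)) with (1 + m * 2)%nat by lia.
    replace (2 * m)%nat with (0 + m * 2)%nat by lia.
    rewrite !Nat.div_add by lia; simpl; lia.
  - assert (Hodd : Nat.odd s = true) by (rewrite <- Nat.negb_even, E; reflexivity).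
    apply Nat.odd_spec in Hodd as [m ->].
    replace (S (2 * m + 1)) with (0 + (m + 1) * 2)%nat by lia.
    replace (2 * m + 1)%nat with (1 + m * 2)%nat by lia.
    rewrite !Nat.div_add by lia; simpl; lia.
Qed.

Lemma kap_invariant_next (delta : R) (k s n n' : nat) (kp : R) (d : bool) :
  0 <= delta -> kap_invariant delta k s n kp -> (n' + (if d then 1 else 0) = n)%nat ->
  kap_invariant delta k (S s) n' (next_kap delta s d kp).
Proof.
  intros Hd [Hk Hacc] Hn.
  assert (Hn' : INR n' = INR n - (if d then 1 else 0)).
  { rewrite <- Hn, plus_INR; destruct d; simpl; ring. }
  unfold kap_invariant, next_kap; rewrite div2_S, plus_INR, Hn'.
  pose proof (Rmax_l (kp - delta) (delta + 1)); pose proof (Rmax_r (kp - delta) (delta + 1)).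
  pose proof (Rmax_l (kp + 1 - (delta + 1)) (delta + 1));
    pose proof (Rmax_r (kp + 1 - (delta + 1)) (delta + 1)).
  destruct (Nat.even s), d; rewrite ?INR_0, ?INR_1; split; nra.
Qed.

Lemma exp_le_mono (x y : R) : x <= y -> exp x <= exp y.
Proof. intros [H | <-]; [left; apply exp_increasing; exact H | lra]. Qed.

Lemma exp_neg1_alternating (N : nat) :
  sum_f_R0 (tg_alt (fun i => / INR (fact i))) (S (2 * N)) <= exp (-1) <=
  sum_f_R0 (tg_alt (fun i => / INR (fact i))) (2 * N).
Proof.
  unfold exp; destruct (exist_exp (-1)) as [l Hl]; simpl.
  apply alternated_series_ineq.
  - intros n; apply Rinv_le_contravar; [apply INR_fact_lt_0|].
    apply le_INR, fact_le; lia.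
  - apply Un_cv_ext with (fun n => 1 ^ n / INR (fact n)); [|apply cv_speed_pow_fact].
    intros n; rewrite pow1; unfold Rdiv; ring.
  - intros eps Heps; destruct (Hl eps Heps) as [N0 HN0]; exists N0; intros n Hn.
    rewrite (sum_eq _ (fun i => / INR (fact i) * (-1) ^ i)); [exact (HN0 n Hn)|].
    intros i _; unfold tg_alt; ring.
Qed.

Lemma exp_neg1_bounds : 0.3666 <= exp (-1) <= 0.3681.
Proof.
  destruct (exp_neg1_alternating 2) as [Hlo _].
  destruct (exp_neg1_alternating 3) as [_ Hhi].
  unfold tg_alt in Hlo, Hhi; cbn [sum_f_R0 fact Nat.mul Nat.add pow] in Hlo, Hhi.
  rewrite ?INR_IZR_INZ in Hlo; rewrite ?INR_IZR_INZ in Hhi.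
  cbv [Z.of_nat PosDef.Pos.of_succ_nat PosDef.Pos.succ] in Hlo, Hhi; lra.
Qed.

Lemma ln_lower (y : R) : 0 < y -> 1 - / y <= ln y.
Proof.
  intros Hy; pose proof (exp_ineq1_le (ln (/ y))) as H.
  rewrite exp_ln, ln_Rinv in H by (try apply Rinv_0_lt_compat; exact Hy); lra.
Qed.

Lemma ln_1_plus_nonneg (x : R) : 0 <= x -> 0 <= ln (1 + x).
Proof.
  intros Hx; destruct Hx as [Hx | <-]; [|rewrite Rplus_0_r, ln_1; lra].
  rewrite <- ln_1; left; apply ln_increasing; lra.
Qed.

Lemma pow_exp_lower (kp : R) (m : nat) :
  1 < kp -> exp (- (INR m / (kp - 1))) <= (1 - / kp) ^ m.
Proof.
  intros Hk.
  assert (Hinv : / kp < 1) by (rewrite <- Rinv_1; apply Rinv_lt_contravar; lra).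
  assert (H0 : 0 < 1 - / kp) by lra.
  rewrite <- (exp_ln ((1 - / kp) ^ m)) by (apply pow_lt; exact H0).
  rewrite ln_pow by exact H0; apply exp_le_mono.
  pose proof (ln_lower _ H0) as Hl; pose proof (pos_INR m).
  replace (1 - / (1 - / kp)) with (- (1 / (kp - 1))) in Hl by (field; lra).
  replace (- (INR m / (kp - 1))) with (INR m * - (1 / (kp - 1))) by (field; lra).
  apply Rmult_le_compat_l; lra.
Qed.

(* When n and kappa are within 10% / 20% of each other, an AT-step delivers
   a message with probability about (n/kappa) exp(-n/kappa) >= 0.35. *)
Lemma delivery_prob_window (n : nat) (kp : R) :
  1000 <= kp -> 0.9 * kp <= INR n <= 1.2 * kp ->
  0.35 <= INR n * / kp * (1 - / kp) ^ pred n.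
Proof.
  intros Hk [Hlo Hhi].
  assert (Hn1 : INR (pred n) = INR n - 1).
  { destruct n; [simpl in Hlo; lra | simpl pred; rewrite S_INR; ring]. }
  set (x := INR n * / kp).
  assert (Hx : 0.9 <= x <= 1.2).
  { unfold x; split; apply Rmult_le_reg_r with kp; try lra;
      rewrite Rmult_assoc, Rinv_l, Rmult_1_r by lra; lra. }
  assert (Hexpo : INR (pred n) / (kp - 1) <= x + 0.001).
  { rewrite Hn1; unfold x; apply Rmult_le_reg_r with (kp * (kp - 1)); [nra|].
    replace ((INR n - 1) / (kp - 1) * (kp * (kp - 1))) with ((INR n - 1) * kp) by (field; lra).
    replace ((INR n * / kp + 0.001) * (kp * (kp - 1))) with ((INR n + 0.001 * kp) * (kp - 1))
      by (field; lra).
    nra. }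
  assert (Hpow : exp (- (x + 0.001)) <= (1 - / kp) ^ pred n).
  { apply Rle_trans with (exp (- (INR (pred n) / (kp - 1))));
      [apply exp_le_mono; lra | apply pow_exp_lower; lra]. }
  assert (Htail : 0.3666 * (1.999 - x) <= exp (- (x + 0.001))).
  { replace (- (x + 0.001)) with (-1 + (0.999 - x)) by lra.
    rewrite exp_plus; pose proof exp_neg1_bounds; pose proof (exp_ineq1_le (0.999 - x)).
    apply Rmult_le_compat; lra. }
  apply Rle_trans with (x * (0.3666 * (1.999 - x))); [nra|].
  apply Rmult_le_compat_l; lra.
Qed.

Definition lam : R := / 1000.
Definition offset (M : R) : R := 5 / 18 * M.
Definition eps (M : R) : R := exp (lam * (1 - offset M)).
Definition horizon (k : nat) : nat := (8 * k + 2)%nat.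

Definition expo (M : R) (n : nat) (kp : R) : R := exp (lam * (kp - 5 / 6 * INR n - offset M)).
Definition Psi (M : R) (k s n : nat) (kp : R) : R := expo M n kp + eps M * INR (horizon k - s).
Definition Phi (M : R) (k s n : nat) (kp : R) : R :=
  if Rle_dec (INR n) M then 0 else Rmin 1 (Psi M k s n kp).

Lemma exp_mul_opp (y : R) : exp y * exp (- y) = 1.
Proof. rewrite <- exp_plus, Rplus_opp_r; apply exp_0. Qed.

Lemma exp_lam_upper : exp lam * (1 - lam) <= 1.
Proof.
  pose proof (exp_ineq1_le (- lam)); pose proof (exp_pos lam); pose proof (exp_mul_opp lam).
  unfold lam in *; nra.
Qed.

(* The exponential drifts down under an AT-step that delivers with
   probability >= 0.35 and then lowers kappa - 5/6 n by c >= 1.88. *)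
Lemma exp_drift (P c : R) :
  0.35 <= P <= 1 -> 1.88 <= c -> P * exp (- (lam * c)) + (1 - P) * exp lam <= 1.
Proof.
  intros HP Hc.
  assert (Hv : exp (- (lam * c)) * (1 + lam * c) <= 1).
  { pose proof (exp_ineq1_le (lam * c)); pose proof (exp_pos (- (lam * c))).
    pose proof (exp_mul_opp (lam * c)); nra. }
  pose proof exp_lam_upper as Hu; pose proof (exp_pos lam).
  set (u := exp lam) in *; set (v := exp (- (lam * c))) in *.
  assert (Hlam : lam = / 1000) by reflexivity.
  set (A := 1 + lam * c) in *; set (B := 1 - lam) in *.
  assert (HA : 0 < A) by (unfold A; rewrite Hlam; nra).
  assert (HB : 0 < B) by (unfold B; rewrite Hlam; lra).
  assert (Hkey : P * B + (1 - P) * A <= A * B) by (unfold A, B; rewrite Hlam; nra).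
  (* P/A + (1-P)/B <= 1 is equivalent to Hkey *)
  apply Rmult_le_reg_r with (A * B); [nra|].
  assert (P * v * A <= P) by nra; assert ((1 - P) * u * B <= 1 - P) by nra.
  nra.
Qed.

Lemma Phi_le_1 (M : R) (k s n : nat) (kp : R) : Phi M k s n kp <= 1.
Proof. unfold Phi; destruct (Rle_dec _ _); [lra | apply Rmin_l]. Qed.

Lemma Phi_le_Psi (M : R) (k s n : nat) (kp : R) : Phi M k s n kp <= Psi M k s n kp.
Proof.
  unfold Phi; destruct (Rle_dec _ _); [|apply Rmin_r].
  unfold Psi, expo, eps; pose proof (pos_INR (horizon k - s)).
  pose proof (exp_pos (lam * (kp - 5 / 6 * INR n - offset M))).
  pose proof (exp_pos (lam * (1 - offset M))); nra.
Qed.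

Lemma Phi_two_outcome (M : R) (k s n : nat) (kp K1 K0 P : R) :
  0 <= P <= 1 ->
  (M < INR n -> Psi M k s n kp < 1 ->
   P * Psi M k (S s) (pred n) K1 + (1 - P) * Psi M k (S s) n K0 <= Psi M k s n kp) ->
  P * Phi M k (S s) (pred n) K1 + (1 - P) * Phi M k (S s) n K0 <= Phi M k s n kp.
Proof.
  intros HP Hstep.
  pose proof (Phi_le_1 M k (S s) (pred n) K1); pose proof (Phi_le_1 M k (S s) n K0).
  pose proof (Phi_le_Psi M k (S s) (pred n) K1); pose proof (Phi_le_Psi M k (S s) n K0).
  unfold Phi at 3; destruct (Rle_dec (INR n) M) as [Hn | Hn].
  - assert (INR (pred n) <= M) by (apply Rle_trans with (INR n); [apply le_INR; lia | exact Hn]).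
    unfold Phi; do 2 (destruct Rle_dec; try lra).
  - destruct (Rle_dec 1 (Psi M k s n kp)) as [Hge | Hlt].
    + rewrite Rmin_left by exact Hge; nra.
    + rewrite Rmin_right by lra; specialize (Hstep (Rnot_le_lt _ _ Hn) (Rnot_le_lt _ _ Hlt)); nra.
Qed.

Lemma expo_le_eps (M : R) (n : nat) (kp : R) : kp - 5 / 6 * INR n <= 1 -> expo M n kp <= eps M.
Proof. intros H; apply exp_le_mono; unfold lam; nra. Qed.

(* While kappa <= 5/6 n, the invariant bounds the number of steps so far,
   so the budget term still has room to decrease. *)
Lemma horizon_budget (delta : R) (k s n : nat) (kp : R) :
  0 <= delta <= 3 -> kap_invariant delta k s n kp -> kp <= 5 / 6 * INR n ->
  (s < horizon k)%nat.
Proof.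
  intros Hd [_ Hacc] Hkp; pose proof (pos_INR n); pose proof (pos_INR k).
  assert (Hs : INR (s / 2) < INR (4 * k)).
  { rewrite mult_INR; simpl (INR 4).
    assert (0 <= (3 - delta) * INR k) by (apply Rmult_le_pos; lra).
    assert (0 <= delta * INR n) by (apply Rmult_le_pos; lra). nra. }
  apply INR_lt in Hs; unfold horizon.
  pose proof (Nat.div_mod_eq s 2); pose proof (Nat.mod_upper_bound s 2 ltac:(lia)); lia.
Qed.

(* Budget regime: both successor exponentials are at most eps, and the
   budget term pays exactly eps. *)
Lemma Psi_step_budget (M : R) (k s n : nat) (kp K1 K0 P : R) :
  0 <= P <= 1 -> (s < horizon k)%nat ->
  K1 - 5 / 6 * INR (pred n) <= 1 -> K0 - 5 / 6 * INR n <= 1 ->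
  P * Psi M k (S s) (pred n) K1 + (1 - P) * Psi M k (S s) n K0 <= Psi M k s n kp.
Proof.
  intros HP Hs H1 H0; unfold Psi.
  pose proof (expo_le_eps M (pred n) K1 H1); pose proof (expo_le_eps M n K0 H0).
  replace (INR (horizon k - s)) with (INR (horizon k - S s) + 1)
    by (rewrite <- S_INR; f_equal; lia).
  pose proof (exp_pos (lam * (kp - 5 / 6 * INR n - offset M))); unfold expo in *.
  pose proof (pos_INR (horizon k - S s)); pose proof (exp_pos (lam * (1 - offset M))).
  unfold eps in *; nra.
Qed.

Lemma drift_window (M : R) (n : nat) (kp : R) :
  1200 <= M -> M < INR n -> 5 / 6 * INR n < kp -> kp - 5 / 6 * INR n - offset M < 0 ->
  1000 <= kp /\ 0.9 * kp <= INR n <= 1.2 * kp.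
Proof. unfold offset; intros; repeat split; lra. Qed.

(* In the window the exponential part is a supermartingale: a delivery
   lowers kappa by delta and n by one, a silent AT-step raises kappa by one. *)
Lemma expo_step_window (delta M : R) (s n : nat) (kp P : R) :
  2.7166 <= delta -> 1200 <= M -> M < INR n -> 0 <= P <= 1 ->
  5 / 6 * INR n < kp -> kp - 5 / 6 * INR n - offset M < 0 ->
  (Nat.even s = false -> P = INR n * / kp * (1 - / kp) ^ pred n) ->
  P * expo M (pred n) (kp - delta) + (1 - P) * expo M n (if Nat.even s then kp else kp + 1)
  <= expo M n kp.
Proof.
  intros Hd HM Hn HP Hhigh Hneg HPat.
  destruct (drift_window M n kp HM Hn Hhigh Hneg) as [Hk Hw].
  assert (Hpred : INR (pred n) = INR n - 1).
  { destruct n; [simpl in Hn; lra | simpl pred; rewrite S_INR; ring]. }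
  set (E := expo M n kp); assert (HE : 0 < E) by apply exp_pos.
  assert (E1 : expo M (pred n) (kp - delta) = E * exp (- (lam * (delta - 5 / 6)))).
  { unfold E, expo; rewrite <- exp_plus, Hpred; f_equal; ring. }
  rewrite E1; destruct (Nat.even s); fold E.
  - assert (Hv : exp (- (lam * (delta - 5 / 6))) <= 1)
      by (rewrite <- exp_0; apply exp_le_mono; unfold lam; lra).
    replace (P * (E * exp (- (lam * (delta - 5 / 6)))) + (1 - P) * E)
      with (E * (1 - P * (1 - exp (- (lam * (delta - 5 / 6)))))) by ring.
    assert (0 <= P * (1 - exp (- (lam * (delta - 5 / 6))))) by (apply Rmult_le_pos; lra).
    nra.
  - assert (E0 : expo M n (kp + 1) = E * exp lam).
    { unfold E, expo; rewrite <- exp_plus; f_equal; ring. }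
    rewrite E0.
    pose proof (delivery_prob_window n kp Hk Hw); rewrite <- HPat in * by reflexivity.
    pose proof (exp_drift P (delta - 5 / 6) ltac:(lra) ltac:(lra)).
    replace (P * (E * exp (- (lam * (delta - 5 / 6)))) + (1 - P) * (E * exp lam))
      with (E * (P * exp (- (lam * (delta - 5 / 6))) + (1 - P) * exp lam)) by ring.
    nra.
Qed.

Lemma Phi_supermartingale (delta M : R) (k s n : nat) (kp P : R) :
  2.7166 <= delta <= 3 -> 1200 <= M -> kap_invariant delta k s n kp -> 0 <= P <= 1 ->
  (Nat.even s = false -> P = INR n * / kp * (1 - / kp) ^ pred n) ->
  P * Phi M k (S s) (pred n) (next_kap delta s true kp)
  + (1 - P) * Phi M k (S s) n (next_kap delta s false kp) <= Phi M k s n kp.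
Proof.
  intros Hd HM Hinv HP HPat; apply Phi_two_outcome; [exact HP|]; intros Hn HPsi.
  rewrite next_kap_delivered; unfold next_kap.
  assert (Hneg : kp - 5 / 6 * INR n - offset M < 0).
  { destruct (Rlt_le_dec (kp - 5 / 6 * INR n - offset M) 0) as [H | H]; [exact H|].
    assert (1 <= expo M n kp) by (rewrite <- exp_0; apply exp_le_mono; unfold lam; nra).
    unfold Psi in HPsi; pose proof (pos_INR (horizon k - s)).
    pose proof (exp_pos (lam * (1 - offset M))); unfold eps in HPsi; nra. }
  assert (Hpred : INR (pred n) = INR n - 1).
  { destruct n; [simpl in Hn; lra | simpl pred; rewrite S_INR; ring]. }
  destruct (Rle_dec kp (5 / 6 * INR n)) as [Hlow | Hhigh].
  - apply Psi_step_budget; [exact HP | apply (horizon_budget delta k s n kp); auto; lra | |].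
    + rewrite Hpred; unfold Rmax; destruct Rle_dec; lra.
    + destruct (Nat.even s); lra.
  - apply Rnot_le_lt in Hhigh.
    destruct (drift_window M n kp HM Hn Hhigh Hneg) as [Hk _].
    rewrite Rmax_left by lra.
    pose proof (expo_step_window delta M s n kp P ltac:(lra) HM Hn HP Hhigh Hneg HPat).
    assert (INR (horizon k - S s) <= INR (horizon k - s)) by (apply le_INR; lia).
    pose proof (exp_pos (lam * (1 - offset M))); unfold Psi, eps in *; nra.
Qed.

(* If after step s at least (delta+1)k AT-steps have occurred, the
   invariant gives kappa >= (delta+1)(n+1), so Phi = 1 as long as n > M. *)
Lemma Phi_final (delta M : R) (k s n : nat) (kp : R) :
  1 <= delta -> 0 <= M -> kap_invariant delta k s n kp -> (delta + 1) * INR k <= INR (s / 2) ->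
  M < INR n -> Phi M k s n kp = 1.
Proof.
  intros Hd HM [_ Hacc] Hend Hn; unfold Phi.
  destruct (Rle_dec (INR n) M) as [H | _]; [lra|].
  apply Rmin_left; unfold Psi.
  assert (1 <= expo M n kp)
    by (rewrite <- exp_0; apply exp_le_mono; unfold lam, offset; nra).
  pose proof (pos_INR (horizon k - s)); pose proof (exp_pos (lam * (1 - offset M))).
  unfold eps; nra.
Qed.

Lemma uniform_step_average (delta : R) (s : nat) (st : list node) (kp : R) (sg : nat)
    (F : list node -> R) (h : bool -> R) :
  uniform st kp sg -> 1 <= kp ->
  (forall X, In X (patterns (length st)) ->
     h (Nat.eqb (n_tx st X) 1) <= F (next_state delta s st X)) ->
  let q := tx_prob s (mkNode true kp sg) in
  let P := INR (n_active st) * q * (1 - q) ^ pred (n_active st) in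
  0 <= P <= 1 /\
  P * h true + (1 - P) * h false <=
  sumR (map (fun X => pat_weight s st X * F (next_state delta s st X)) (patterns (length st))).
Proof.
  intros Hu Hk HF q P.
  assert (Hq : common_tx s st q) by (apply uniform_common_tx; exact Hu).
  assert (Hqb : 0 <= q <= 1) by (apply tx_prob_bounds; exact Hk).
  assert (Hw : forall nd, In nd st -> active nd = true -> 0 <= tx_prob s nd <= 1)
    by (intros nd Hin Ha; rewrite (Hq nd Hin Ha); exact Hqb).
  assert (HP : P = expect_ntx s st (fun c => if Nat.eqb c 1 then 1 else 0))
    by (symmetry; apply expect_ntx_single, Hq).
  rewrite HP; split; [split|].
  - apply Rle_trans with (expect_ntx s st (fun _ => 0)); [rewrite expect_ntx_const; lra|].
    apply expect_ntx_mono; [exact Hw | intros c; destruct (Nat.eqb c 1); lra].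
  - apply Rle_trans with (expect_ntx s st (fun _ => 1)); [|rewrite expect_ntx_const; lra].
    apply expect_ntx_mono; [exact Hw | intros c; destruct (Nat.eqb c 1); lra].
  - rewrite <- expect_ntx_delivery; apply sumR_map_le; intros X HX.
    apply Rmult_le_compat_l; [apply pat_weight_nonneg; exact Hw | exact (HF X HX)].
Qed.

Lemma prob_le_lower (delta M : R) (k : nat) :
  2.7166 <= delta <= 3 -> 1200 <= M ->
  forall T s st kp sg, uniform st kp sg -> kap_invariant delta k s (n_active st) kp ->
  (delta + 1) * INR k <= INR ((s + T) / 2) ->
  1 - Phi M k s (n_active st) kp <= prob_le delta M T s st.
Proof.
  intros Hd HM; induction T as [|T IH]; intros s st kp sg Hu Hinv Hend.
  - rewrite Nat.add_0_r in Hend; simpl prob_le.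
    destruct (Rle_dec (INR (n_active st)) M) as [Hn | Hn].
    + pose proof (Phi_le_1 M k s (n_active st) kp); unfold Phi.
      destruct (Rle_dec _ _); lra.
    + rewrite (Phi_final delta M k s (n_active st) kp) by (auto; lra); lra.
  - set (n := n_active st) in *.
    set (h := fun d : bool =>
                1 - Phi M k (S s) (if d then pred n else n) (next_kap delta s d kp)).
    assert (Hsucc : forall X, In X (patterns (length st)) ->
              h (Nat.eqb (n_tx st X) 1) <= prob_le delta M T (S s) (next_state delta s st X)).
    { intros X HX.
      destruct (next_state_uniform delta s st X kp sg (patterns_length _ _ HX) Hu)
        as [Hu' Hcount]; fold n in Hcount.
      assert (Hn' : n_active (next_state delta s st X)
                    = if Nat.eqb (n_tx st X) 1 then pred n else n)
        by (destruct (Nat.eqb (n_tx st X) 1); lia).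
      unfold h; rewrite <- Hn'; apply IH with (sg := next_sig (Nat.eqb (n_tx st X) 1) sg).
      - exact Hu'.
      - apply (kap_invariant_next delta k s n); [lra | exact Hinv | exact Hcount].
      - replace (S s + T)%nat with (s + S T)%nat by lia; exact Hend. }
    destruct (uniform_step_average delta s st kp sg _ h Hu ltac:(destruct Hinv; lra) Hsucc)
      as [HP Havg]; fold n in HP, Havg.
    pose proof (Phi_supermartingale delta M k s n kp _ Hd HM Hinv HP) as Hstep.
    specialize (Hstep ltac:(intros Hodd; unfold tx_prob; simpl; rewrite Hodd; reflexivity)).
    unfold h in Havg; cbn [prob_le]; lra.
Qed.

Lemma n_active_init (delta : R) (k : nat) : n_active (init_state delta k) = k.
Proof. unfold n_active, init_state; induction k as [|k IH]; simpl; auto. Qed.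

Lemma init_uniform (delta : R) (k : nat) : uniform (init_state delta k) (delta + 1) 0.
Proof.
  intros nd Hin _; unfold init_state in Hin; apply repeat_spec in Hin; subst nd.
  split; reflexivity.
Qed.

Lemma init_invariant (delta : R) (k : nat) :
  kap_invariant delta k 1 k (delta + 1).
Proof. unfold kap_invariant; simpl (1 / 2)%nat; simpl INR; lra. Qed.

(* Since M is of order ln(1+k), the initial potential is O(k / (1+k)^3). *)
Lemma Phi_initial (delta M : R) (k : nat) :
  0 <= delta <= 3 -> 10000 <= INR k -> 11000 * ln (1 + INR k) <= M ->
  Phi M k 1 k (delta + 1) <= 1 / (1 + INR k).
Proof.
  intros Hd Hk HM.
  apply Rle_trans with (Psi M k 1 k (delta + 1)); [apply Phi_le_Psi|]; unfold Psi.
  pose proof (expo_le_eps M k (delta + 1) ltac:(lra)).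
  replace (INR (horizon k - 1)) with (8 * INR k + 1)
    by (unfold horizon; replace (8 * k + 2 - 1)%nat with (S (8 * k)) by lia;
        rewrite S_INR, mult_INR; simpl; ring).
  set (y := exp (lam * offset M)).
  assert (Heps : eps M * y = exp lam)
    by (unfold eps, y; rewrite <- exp_plus; f_equal; ring).
  assert (Hy : (1 + INR k) ^ 3 <= y).
  { unfold y; rewrite <- (exp_ln ((1 + INR k) ^ 3)) by (apply pow_lt; lra).
    apply exp_le_mono; rewrite ln_pow by lra; unfold lam, offset; simpl INR.
    pose proof (ln_1_plus_nonneg (INR k) (pos_INR k)); lra. }
  assert (Heps0 : 0 < eps M) by apply exp_pos.
  assert (Hlam : exp lam <= 1.002)
    by (pose proof exp_lam_upper; pose proof (exp_pos lam); unfold lam in *; nra).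
  assert (Hbound : eps M * (8 * INR k + 2) * (1 + INR k) ^ 3 <= 1.002 * (8 * INR k + 2)).
  { apply Rle_trans with (eps M * (8 * INR k + 2) * y).
    - apply Rmult_le_compat_l; [apply Rmult_le_pos; lra | exact Hy].
    - replace (eps M * (8 * INR k + 2) * y) with (exp lam * (8 * INR k + 2))
        by (rewrite <- Heps; ring).
      apply Rmult_le_compat_r; lra. }
  apply Rmult_le_reg_r with ((1 + INR k) ^ 3); [apply pow_lt; lra|].
  replace (1 / (1 + INR k) * (1 + INR k) ^ 3) with ((1 + INR k) ^ 2) by (field; lra).
  apply Rle_trans with (eps M * (8 * INR k + 2) * (1 + INR k) ^ 3); [|simpl in *; nra].
  apply Rmult_le_compat_r; [apply pow_le; lra | lra].
Qed.

Lemma delta_range (delta : R) :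
  exp 1 < delta -> delta <= sum_f_R0 (fun j => (5 / 6) ^ S j) 4 ->
  2.7166 <= delta <= 3 /\ 1 < ln delta.
Proof.
  intros He Hs; simpl in Hs.
  assert (Hinv : exp 1 * exp (-1) = 1) by exact (exp_mul_opp 1).
  pose proof exp_neg1_bounds; pose proof (exp_pos 1).
  repeat split; try nra.
  rewrite <- (ln_exp 1); apply ln_increasing; [apply exp_pos | exact He].
Qed.

Lemma threshold_lower (k : nat) (delta : R) :
  2.7166 <= delta <= 3 -> 1 < ln delta ->
  let tau := 300 * delta * ln (1 + INR k) in
  let gamma := (delta - 1) * (3 - delta) / (delta - 2) in
  let Ssum := 2 * sum_f_R0 (fun j => (5 / 6) ^ j) 4 * tau in
  11000 * ln (1 + INR k) <=
  ((delta + 1) * ln delta - 1) / (ln delta - 1) * Ssum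
  + ((gamma + 2 * tau + 1) * ln delta - 1) / (ln delta - 1).
Proof.
  intros Hd HL tau gamma Ssum; pose proof (pos_INR k).
  pose proof (ln_1_plus_nonneg (INR k) (pos_INR k)) as Hlk.
  assert (Htau : 0 <= tau) by (unfold tau; apply Rmult_le_pos; [lra | exact Hlk]).
  assert (HS : 11000 * ln (1 + INR k) <= 2 * Ssum)
    by (unfold Ssum, tau; simpl sum_f_R0; simpl pow; nra).
  assert (Hc1 : 2 <= ((delta + 1) * ln delta - 1) / (ln delta - 1)).
  { apply Rmult_le_reg_r with (ln delta - 1); [lra|].
    unfold Rdiv; rewrite Rmult_assoc, Rinv_l by lra; nra. }
  assert (Hg : 0 <= gamma).
  { unfold gamma, Rdiv; apply Rmult_le_pos; [nra | left; apply Rinv_0_lt_compat; lra]. }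
  assert (Hc2 : 0 <= ((gamma + 2 * tau + 1) * ln delta - 1) / (ln delta - 1)).
  { unfold Rdiv; apply Rmult_le_pos; [nra | left; apply Rinv_0_lt_compat; lra]. }
  assert (2 * Ssum <= ((delta + 1) * ln delta - 1) / (ln delta - 1) * Ssum)
    by (apply Rmult_le_compat_r; lra).
  lra.
Qed.

Lemma threshold_consequences (k : nat) (M : R) :
  11000 * ln (1 + INR k) <= M -> M < INR k -> 10000 <= INR k /\ 1200 <= M.
Proof.
  intros HM Hk; pose proof (pos_INR k).
  assert (Hl : INR k / (1 + INR k) <= ln (1 + INR k)).
  { replace (INR k / (1 + INR k)) with (1 - / (1 + INR k)) by (field; lra).
    apply ln_lower; lra. }
  assert (Hr : INR k / (1 + INR k) * (1 + INR k) = INR k) by (field; lra).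
  assert (0 <= INR k / (1 + INR k))
    by (unfold Rdiv; apply Rmult_le_pos; [lra | left; apply Rinv_0_lt_compat; lra]).
  assert (Hk0 : 10000 <= INR k) by nra.
  split; [exact Hk0|].
  assert (/ 2 <= INR k / (1 + INR k)).
  { apply Rmult_le_reg_r with (1 + INR k); [lra|]; rewrite Hr; lra. }
  lra.
Qed.

Theorem mainTheorem7 (k : nat) (delta : R) :
  exp 1 < delta ->
  delta <= sum_f_R0 (fun j => (5/6) ^ (S j)) 4 ->
  let tau := 300 * delta * ln (1 + INR k) in
  let gamma := (delta - 1) * (3 - delta) / (delta - 2) in
  let Ssum := 2 * sum_f_R0 (fun j => (5/6) ^ j) 4 * tau in
  let M := ((delta + 1) * ln delta - 1) / (ln delta - 1) * Ssum
           + ((gamma + 2 * tau + 1) * ln delta - 1) / (ln delta - 1) in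
  M < INR k ->
  forall t : nat, (delta + 1) * INR k <= INR (n_AT t) ->
  prob_after delta M k t >= 1 - 1 / (1 + INR k).
Proof.
  intros He Hs tau gamma Ssum M HMk t Ht.
  destruct (delta_range delta He Hs) as [Hd HL].
  assert (HM : 11000 * ln (1 + INR k) <= M) by exact (threshold_lower k delta Hd HL).
  destruct (threshold_consequences k M HM HMk) as [Hk HM1200].
  pose proof (prob_le_lower delta M k Hd HM1200 t 1 (init_state delta k) (delta + 1) 0
                (init_uniform delta k)) as Hmain.
  rewrite n_active_init in Hmain.
  unfold n_AT in Ht; rewrite Nat.add_comm in Ht.
  specialize (Hmain (init_invariant delta k) Ht).
  pose proof (Phi_initial delta M k ltac:(lra) Hk HM).
  unfold prob_after; lra.
Qed.
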